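(* In the setting described in the context, for any vector $\boldsymbol{c}=(c_1,c_2)$ of positive integers and all $\theta_1,\theta_2\in\mathbb{R}$, $$\mathrm{cp}(A_{*,*}(\theta_1,\theta_2))=\mathrm{cp}\big({}^{\boldsymbol{c}}\!A_{*,*}(c_1\theta_1,c_2\theta_2)\big).$$
   Context: Let $S_0=\{1,\dots,s_0\}$ be finite and $A_{k,l}$, $k,l\in\{-1,0,1\}$, nonnegative $s_0\times s_0$ matrices with $\sum A_{k,l}$ stochastic; they are the transition blocks of a Markov chain $\{\boldsymbol{Y}_n\}$ on $\mathbb{Z}^2\times S_0$ with $\mathbb{P}(\boldsymbol{Y}_{n+1}=(x_1+k,x_2+l,j')\mid\boldsymbol{Y}_n=(x_1,x_2,j))=[A_{k,l}]_{j,j'}$ (no other transitions). Let $\mathbb{S}_+=\mathbb{Z}_+^2\times S_0$, $P_+$ the restriction of the transition matrix to $\mathbb{S}_+$, $\boldsymbol\pi_{*,*}$ the stationary distribution of $\sum A_{k,l}$, $a_1=\boldsymbol{\pi}_{*,*}\sum_l(A_{1,l}-A_{-1,l})\mathbf{1}$, $a_2=\boldsymbol{\pi}_{*,*}\sum_k(A_{k,1}-A_{k,-1})\mathbf{1}$. Standing assumptions: $\{\boldsymbol Y_n\}$ irreducible and aperiodic; $a_1<0$ or $a_2<0$; $P_+$ irreducible. $A_{*,*}(\theta_1,\theta_2)=\sum_{k,l}e^{k\theta_1+l\theta_2}A_{k,l}$. For a nonnegative square matrix $A$, $\mathrm{cp}(A)=\sup\{r\ge0:\sum_nr^nA^n<\infty\text{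 elementwise}\}$. Given $\boldsymbol c$, let $\mathbb{Z}_{0,m}=\{0,1,\dots,m\}$ and for $i,j\in\{-1,0,1\}$ define matrices ${}^{\boldsymbol{c}}\!A_{i,j}$ indexed by $(\mathbb{Z}_{0,c_1-1}\times\mathbb{Z}_{0,c_2-1}\times S_0)^2$ by $[{}^{\boldsymbol{c}}\!A_{i,j}]_{(m_1,m_2,s),(m_1',m_2',s')}=[A_{u_1,u_2}]_{s,s'}$ with $u_1=c_1i+m_1'-m_1$, $u_2=c_2j+m_2'-m_2$, if $u_1,u_2\in\{-1,0,1\}$, and $0$ otherwise (these are the transition blocks of the process $({}^{\boldsymbol c}X_{1,n},{}^{\boldsymbol c}X_{2,n},({}^{\boldsymbol c}M_{1,n},{}^{\boldsymbol c}M_{2,n},J_n))$ where $X_{i,n}=c_i\,{}^{\boldsymbol c}X_{i,n}+{}^{\boldsymbol c}M_{i,n}$, $0\le{}^{\boldsymbol c}M_{i,n}\le c_i-1$). Set ${}^{\boldsymbol{c}}\!A_{*,*}(\theta_1,\theta_2)=\sum_{i,j\in\{-1,0,1\}}e^{i\theta_1+j\theta_2}\,{}^{\boldsymbol{c}}\!A_{i,j}$. *)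

From HB Require Import structures.
From mathcomp Require Import all_boot all_order all_algebra.
From mathcomp Require Import all_classical all_reals all_analysis.
Set Implicit Arguments. Unset Strict Implicit. Unset Printing Implicit Defensive.
Import Order.TTheory GRing.Theory Num.Theory.
Local Open Scope ring_scope.

(* The jump set {-1,0,1}.  Transition blocks are given as a family
   A : int -> int -> 'M_s0 of which only the values A k l with
   k, l \in dom3 are ever used. *)
Definition dom3 : seq int := [:: -1; 0; 1].

Section Defs.
Variable R : realType.

Definition cp (n : nat) (M : 'M[R]_n) : \bar R :=
  ereal_sup [set r%:E | r in
    [set r : R | 0 <= r /\
       forall i j, (\sum_(0 <= k <oo) ((r ^+ k * (M ^+ k) i j)%:E) < +oo)%E]].

Variable s0 : nat.
Variable A : int -> int -> 'M[R]_s0.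

Definition Astar (t1 t2 : R) : 'M[R]_s0 :=
  \sum_(k <- dom3) \sum_(l <- dom3) (expR (k%:~R * t1 + l%:~R * t2) *: A k l).

Definition Asum : 'M[R]_s0 := \sum_(k <- dom3) \sum_(l <- dom3) A k l.

Definition state := (int * int * 'I_s0)%type.

Definition Ptrans (x y : state) : R :=
  let: (x1, x2, j) := x in let: (y1, y2, j') := y in
  if (y1 - x1 \in dom3) && (y2 - x2 \in dom3) then A (y1 - x1) (y2 - x2) j j'
  else 0.

Fixpoint reach_in (S : state -> Prop) (n : nat) (x y : state) : Prop :=
  match n with
  | 0 => x = y /\ S x
  | n'.+1 => S x /\ exists z, 0 < Ptrans x z /\ reach_in S n' z y
  end.

Definition irreducible_on (S : state -> Prop) : Prop :=
  forall x y, S x -> S y -> exists n, reach_in S n x y.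

Definition Y_irreducible : Prop := irreducible_on (fun _ => True).

Definition Y_aperiodic : Prop :=
  forall (x : state) (d : nat),
    (forall n, (0 < n)%N -> reach_in (fun _ => True) n x x -> (d %| n)%N) ->
    d = 1%N.

Definition Splus (x : state) : Prop := let: (x1, x2, _) := x in 0 <= x1 /\ 0 <= x2.
Definition Pplus_irreducible : Prop := irreducible_on Splus.

Definition stationary (pi : 'rV[R]_s0) : Prop :=
  (forall j, 0 <= pi 0 j) /\ \sum_j pi 0 j = 1 /\ pi *m Asum = pi.

Definition drift1 (pi : 'rV[R]_s0) : R :=
  (pi *m (\sum_(l <- dom3) (A 1 l - A (-1) l)) *m (const_mx 1 : 'cV[R]_s0)) 0 0.
Definition drift2 (pi : 'rV[R]_s0) : R :=
  (pi *m (\sum_(k <- dom3) (A k 1 - A k (-1))) *m (const_mx 1 : 'cV[R]_s0)) 0 0.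

(* the blocks ^c A_{i,j}, indexed by Z_{0,c1-1} x Z_{0,c2-1} x S0,
   realized as square matrices of size #|T| via the enumeration of T *)
Definition cidx (c1 c2 : nat) := ('I_c1 * 'I_c2 * 'I_s0)%type.

Definition cA (c1 c2 : nat) (i j : int) : 'M[R]_#|{: cidx c1 c2}| :=
  \matrix_(p, q)
    let: (m1, m2, s) := (enum_val p : cidx c1 c2) in
    let: (m1', m2', s') := (enum_val q : cidx c1 c2) in
    let u1 := (c1%:Z * i + (m1' : nat)%:Z - (m1 : nat)%:Z)%R in
    let u2 := (c2%:Z * j + (m2' : nat)%:Z - (m2 : nat)%:Z)%R in
    if (u1 \in dom3) && (u2 \in dom3) then A u1 u2 s s' else 0.

Definition cAstar (c1 c2 : nat) (t1 t2 : R) : 'M[R]_#|{: cidx c1 c2}| :=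
  \sum_(i <- dom3) \sum_(j <- dom3) (expR (i%:~R * t1 + j%:~R * t2) *: cA c1 c2 i j).

End Defs.

From HB Require Import structures.
From mathcomp Require Import all_boot all_order all_algebra.
From mathcomp Require Import all_classical all_reals all_analysis.
From mathcomp Require Import zify ring.
Set Implicit Arguments. Unset Strict Implicit. Unset Printing Implicit Defensive.
Import Order.TTheory GRing.Theory Num.Theory.
Local Open Scope ring_scope.

(* Write each coordinate as x = c x' + m with 0 <= m < c and weight the residue
   by w(m) = exp (m1 t1 + m2 t2).  Every jump u in {-1,0,1} from residue m is
   u = c i + m' - m for exactly one carry i in {-1,0,1} and one residue m', so
   the lumping matrix W((m, s), s') = [s = s'] w(m) intertwines the two kernels:
   cA(c1 t1, c2 t2) W = W A(t1, t2), hence also all their powers.  The weights are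
   positive and finitely many, so each entry of one power is bounded by a
   positive combination of entries of the other, and the series sum_N r^N M^N
   converge entrywise for the same r >= 0. *)

Section NonnegSeries.
Variable R : realType.

Lemma nneseries_lt_pinfty_le (a b : nat -> R) (C : R) : 0 <= C ->
  (forall n, 0 <= b n) -> (forall n, 0 <= a n <= C * b n) ->
  (\sum_(0 <= n <oo) (b n)%:E < +oo)%E -> (\sum_(0 <= n <oo) (a n)%:E < +oo)%E.
Proof.
move=> C0 b0 ab hb.
apply: (@le_lt_trans _ _ (\sum_(0 <= n <oo) (C * b n)%:E)%E).
  apply: lee_nneseries => n _; rewrite lee_fin; first by case/andP: (ab n).
  by case/andP: (ab n).
under eq_eseriesr do rewrite EFinM.
rewrite nneseriesZl; last by move=> n _; rewrite lee_fin.
exact: lte_mul_pinfty.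
Qed.

Lemma nneseries_sum_lt_pinfty (I : finType) (a : I -> nat -> R) :
  (forall i n, 0 <= a i n) -> (forall i, \sum_(0 <= n <oo) (a i n)%:E < +oo)%E ->
  (\sum_(0 <= n <oo) (\sum_i a i n)%:E < +oo)%E.
Proof.
move=> a0 ha; under eq_eseriesr do rewrite -sumEFin.
rewrite nneseries_sum; last by move=> i n _; rewrite lee_fin.
exact: lte_sum_pinfty.
Qed.

End NonnegSeries.

Section PowerSeries.
Variable R : realType.

Definition pow_summable k (M : 'M[R]_k) (r : R) : Prop :=
  forall i j, (\sum_(0 <= n <oo) ((r ^+ n * (M ^+ n) i j)%:E) < +oo)%E.

Lemma eq_cp k1 k2 (M1 : 'M[R]_k1) (M2 : 'M[R]_k2) :
  (forall r, 0 <= r -> pow_summable M1 r <-> pow_summable M2 r) -> cp M1 = cp M2.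
Proof.
move=> eqM; rewrite /cp; congr (ereal_sup (image _ _)).
by apply/seteqP; split=> r [r0 hr]; split=> //; apply/(eqM r r0).
Qed.

Lemma mxpow_ge0 k (M : 'M[R]_k) n i j :
  (forall i j, 0 <= M i j) -> 0 <= (M ^+ n) i j.
Proof.
move=> M0; elim: n i j => [|n IHn] i j; first by rewrite expr0 mxE ler0n.
by rewrite exprS -mulmxE mxE; apply: sumr_ge0 => l _; apply: mulr_ge0.
Qed.

Lemma mulmx_pow_intertwine k l (B : 'M[R]_k) (W : 'M[R]_(k, l)) (A : 'M[R]_l) n :
  B *m W = W *m A -> B ^+ n *m W = W *m A ^+ n.
Proof.
move=> BW; elim: n => [|n IHn]; first by rewrite !expr0 mul1mx mulmx1.
by rewrite exprSr -mulmxE -mulmxA BW mulmxA IHn -mulmxA mulmxE -exprSr.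
Qed.

End PowerSeries.

Section Digits.
Variable R : realType.

Lemma dom3_indicatorE (g : int -> R) (u : int) :
  (if u \in dom3 then g u else 0) = \sum_(v <- dom3) ((u == v) : nat)%:R * g v.
Proof.
rewrite /dom3 !big_cons big_nil !inE.
have [->|u1] := eqVneq u (-1); first by rewrite /= ?mul0r ?mul1r ?addr0.
have [->|u0] := eqVneq u 0; first by rewrite /= ?mul0r ?mul1r ?addr0 ?add0r.
by have [->|u2] := eqVneq u 1; rewrite /= ?mul0r ?mul1r ?addr0 ?add0r.
Qed.

Lemma dom3_digit (c m : nat) (v : int) : (m < c)%N -> v \in dom3 ->
  exists2 k, (k < c)%N & forall m' : nat, (m' < c)%N ->
    (\sum_(i <- dom3) ((c%:Z * i + m'%:Z - m%:Z)%R == v))%N = (m' == k).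
Proof.
move=> hm; rewrite !inE => /or3P [] /eqP ->;
  [ case: m hm => [|m] hm; [exists (c - 1)%N | exists m]
  | exists m
  | have [<-|] := eqVneq m.+1 c; [exists 0%N | exists m.+1] ];
  try lia;
  by move=> m' hm'; rewrite /dom3 !big_cons big_nil; do 4 case: eqP => ?; rewrite /=; lia.
Qed.

Lemma sum_dom3_digits (c m : nat) (v : int) : (m < c)%N -> v \in dom3 ->
  (\sum_(m' < c) \sum_(i <- dom3) ((c%:Z * i + (m' : nat)%:Z - m%:Z)%R == v))%N = 1%N.
Proof.
move=> hm hv; have [k hk digit] := dom3_digit hm hv.
rewrite (bigD1 (Ordinal hk)) //= digit // eqxx big1 // => m' hm'.
by rewrite digit //; case: eqP => // eq_m'k; rewrite -val_eqE /= eq_m'k eqxx in hm'.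
Qed.

Lemma sum_dom3_shift (c m : nat) (g : int -> R) : (m < c)%N ->
  (forall u, u \notin dom3 -> g u = 0) ->
  \sum_(m' < c) \sum_(i <- dom3) g (c%:Z * i + (m' : nat)%:Z - m%:Z) = \sum_(u <- dom3) g u.
Proof.
move=> hm g0; have gE u : g u = \sum_(v <- dom3) ((u == v) : nat)%:R * g v.
  by rewrite -dom3_indicatorE; case: ifPn => // /g0.
under eq_bigr do under eq_bigr do rewrite gE.
under eq_bigr do rewrite exchange_big /=.
rewrite exchange_big big_seq [RHS]big_seq; apply: eq_bigr => v hv /=.
under eq_bigr do rewrite -mulr_suml -natr_sum.
by rewrite -mulr_suml -natr_sum sum_dom3_digits // mul1r.
Qed.

End Digits.

Section Lumping.
Variables (R : realType) (s0 : nat) (A : int -> int -> 'M[R]_s0).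
Variables (c1 c2 : nat) (t1 t2 : R).

Local Notation idx := (cidx s0 c1 c2).
Local Notation n := #|{: idx}|.
Local Notation cB := (cAstar A c1 c2 (c1%:R * t1) (c2%:R * t2)).
Local Notation As := (Astar A t1 t2).

Definition lump_weight (m1 : 'I_c1) (m2 : 'I_c2) : R :=
  expR ((m1 : nat)%:~R * t1 + (m2 : nat)%:~R * t2).

Definition cindex m1 m2 s : 'I_n := enum_rank ((m1, m2, s) : idx).

Definition lump_mx : 'M[R]_(n, s0) :=
  \matrix_(q, s') let: (m1, m2, s) := enum_val q in ((s == s') : nat)%:R * lump_weight m1 m2.

Lemma lump_weight_gt0 m1 m2 : 0 < lump_weight m1 m2.
Proof. exact: expR_gt0. Qed.

Lemma lump_weight_ge0 m1 m2 : 0 <= lump_weight m1 m2.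
Proof. exact/ltW/lump_weight_gt0. Qed.

Lemma sum_cindex (F : 'I_n -> R) :
  \sum_q F q = \sum_m1 \sum_m2 \sum_s F (cindex m1 m2 s).
Proof.
rewrite (reindex (@enum_rank idx)) /=; last first.
  by exists enum_val => x _; [apply: enum_rankK | apply: enum_valK].
by rewrite pair_bigA pair_bigA; apply: eq_bigr => -[[]].
Qed.

Lemma mulmx_lump_mx k (M : 'M[R]_(k, n)) p s' :
  (M *m lump_mx) p s' =
  \sum_m1' \sum_m2' M p (cindex m1' m2' s') * lump_weight m1' m2'.
Proof.
rewrite mxE sum_cindex; apply: eq_bigr => m1' _; apply: eq_bigr => m2' _.
rewrite (bigD1 s') //= big1 ?addr0 => [|s hs];
  rewrite mxE enum_rankK ?eqxx ?mul1r //.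
by rewrite (negbTE hs) mul0r mulr0.
Qed.

Lemma lump_mx_mulmx k (M : 'M[R]_(s0, k)) m1 m2 s j :
  (lump_mx *m M) (cindex m1 m2 s) j = lump_weight m1 m2 * M s j.
Proof.
rewrite mxE (bigD1 s) //= big1 ?addr0 => [|s' hs'];
  rewrite mxE enum_rankK ?eqxx ?mul1r //.
by rewrite eq_sym (negbTE hs') mul0r mul0r.
Qed.

Lemma expR_cshift (i j : int) (m1 m2 m1' m2' : nat) :
  expR (i%:~R * (c1%:R * t1) + j%:~R * (c2%:R * t2)) * expR (m1'%:~R * t1 + m2'%:~R * t2) =
  expR (m1%:~R * t1 + m2%:~R * t2) *
  expR ((c1%:Z * i + m1'%:Z - m1%:Z)%:~R * t1 + (c2%:Z * j + m2'%:Z - m2%:Z)%:~R * t2).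
Proof. by rewrite -!expRD !intrD !intrM !intrN; congr expR; ring. Qed.

Definition Astar_term s s' (u1 u2 : int) : R :=
  if (u1 \in dom3) && (u2 \in dom3) then expR (u1%:~R * t1 + u2%:~R * t2) * A u1 u2 s s'
  else 0.

Lemma Astar_term0l s s' u1 u2 : u1 \notin dom3 -> Astar_term s s' u1 u2 = 0.
Proof. by move=> /negbTE hu1; rewrite /Astar_term hu1. Qed.

Lemma Astar_term0r s s' u1 u2 : u2 \notin dom3 -> Astar_term s s' u1 u2 = 0.
Proof. by move=> /negbTE hu2; rewrite /Astar_term hu2 andbF. Qed.

Lemma Astar_termE s s' : As s s' = \sum_(k <- dom3) \sum_(l <- dom3) Astar_term s s' k l.
Proof.
rewrite /Astar summxE; apply: eq_big_seq => k hk.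
by rewrite summxE; apply: eq_big_seq => l hl; rewrite mxE /Astar_term hk hl.
Qed.

Lemma cAstar_entry_weight m1 m2 s (m1' : 'I_c1) (m2' : 'I_c2) s' :
  cB (cindex m1 m2 s) (cindex m1' m2' s') * lump_weight m1' m2' =
  lump_weight m1 m2 * \sum_(i <- dom3) \sum_(j <- dom3)
    Astar_term s s' (c1%:Z * i + (m1' : nat)%:Z - (m1 : nat)%:Z)
                    (c2%:Z * j + (m2' : nat)%:Z - (m2 : nat)%:Z).
Proof.
rewrite /cAstar summxE mulr_suml mulr_sumr; apply: eq_bigr => i _.
rewrite summxE mulr_suml mulr_sumr; apply: eq_bigr => j _.
rewrite !mxE !enum_rankK mulrAC /lump_weight (expR_cshift i j m1 m2) /Astar_term /=.
by case: ifP; rewrite ?mulr0 ?mul0r ?mulrA.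
Qed.

Lemma cAstar_lump_entry m1 m2 s s' :
  \sum_m1' \sum_m2' cB (cindex m1 m2 s) (cindex m1' m2' s') * lump_weight m1' m2' =
  lump_weight m1 m2 * As s s'.
Proof.
under eq_bigr do under eq_bigr do rewrite cAstar_entry_weight.
under eq_bigr do rewrite -mulr_sumr.
rewrite -mulr_sumr Astar_termE; congr (_ * _).
transitivity (\sum_(m1' < c1) \sum_(i <- dom3) \sum_(l <- dom3)
                Astar_term s s' (c1%:Z * i + (m1' : nat)%:Z - (m1 : nat)%:Z) l).
  apply: eq_bigr => m1' _; rewrite exchange_big; apply: eq_bigr => i _ /=.
  by apply: sum_dom3_shift => // u /Astar_term0r.
apply: (sum_dom3_shift (g := fun k => \sum_(l <- dom3) Astar_term s s' k l)) => // k hk.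
by apply: big1 => l _; apply: Astar_term0l.
Qed.

Lemma cAstar_lump : cB *m lump_mx = lump_mx *m As.
Proof.
apply/matrixP => p s'; rewrite -(enum_valK p); case: (enum_val p) => [[m1 m2] s].
by rewrite -/(cindex m1 m2 s) mulmx_lump_mx lump_mx_mulmx cAstar_lump_entry.
Qed.

Lemma cAstar_pow_lump N m1 m2 s s' :
  \sum_m1' \sum_m2' (cB ^+ N) (cindex m1 m2 s) (cindex m1' m2' s') * lump_weight m1' m2' =
  lump_weight m1 m2 * (As ^+ N) s s'.
Proof. by rewrite -mulmx_lump_mx (mulmx_pow_intertwine _ cAstar_lump) lump_mx_mulmx. Qed.

Hypothesis A_ge0 : forall k l, k \in dom3 -> l \in dom3 -> forall i j, 0 <= A k l i j.

Lemma Astar_ge0 i j : 0 <= As i j.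
Proof.
rewrite Astar_termE; apply: sumr_ge0 => k _; apply: sumr_ge0 => l _.
rewrite /Astar_term; case: ifP => // /andP[hk hl].
by rewrite mulr_ge0 ?expR_ge0 ?A_ge0.
Qed.

Lemma cAstar_ge0 p q : 0 <= cB p q.
Proof.
rewrite /cAstar summxE; apply: sumr_ge0 => i _; rewrite summxE; apply: sumr_ge0 => j _.
rewrite !mxE mulr_ge0 ?expR_ge0 //.
case: (enum_val p) => [[m1 m2] s]; case: (enum_val q) => [[m1' m2'] s'] /=.
by case: ifP => // /andP[h1 h2]; apply: A_ge0.
Qed.

Lemma Astar_pow_ge0 N i j : 0 <= (As ^+ N) i j.
Proof. exact/mxpow_ge0/Astar_ge0. Qed.

Lemma cAstar_pow_ge0 N p q : 0 <= (cB ^+ N) p q.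
Proof. exact/mxpow_ge0/cAstar_ge0. Qed.

Lemma cAstar_pow_le N m1 m2 s m1' m2' s' :
  (cB ^+ N) (cindex m1 m2 s) (cindex m1' m2' s') * lump_weight m1' m2' <=
  lump_weight m1 m2 * (As ^+ N) s s'.
Proof.
have term_ge0 a b : 0 <= (cB ^+ N) (cindex m1 m2 s) (cindex a b s') * lump_weight a b.
  by rewrite mulr_ge0 ?cAstar_pow_ge0 ?lump_weight_ge0.
rewrite -cAstar_pow_lump (bigD1 m1') //= (bigD1 m2') //= -addrA lerDl.
by rewrite addr_ge0 ?sumr_ge0 // => a _; rewrite sumr_ge0.
Qed.

Lemma pow_summable_cAstar r : 0 <= r -> pow_summable As r -> pow_summable cB r.
Proof.
move=> r0 sumA p q; rewrite -(enum_valK p) -(enum_valK q).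
case: (enum_val p) => [[m1 m2] s]; case: (enum_val q) => [[m1' m2'] s'].
rewrite -/(cindex m1 m2 s) -/(cindex m1' m2' s').
have w_gt0 := lump_weight_gt0 m1' m2'.
apply: (nneseries_lt_pinfty_le (C := lump_weight m1 m2 / lump_weight m1' m2')) (sumA s s').
- by rewrite divr_ge0 ?lump_weight_ge0.
- by move=> N; rewrite mulr_ge0 ?exprn_ge0 ?Astar_pow_ge0.
move=> N; rewrite mulr_ge0 ?exprn_ge0 ?cAstar_pow_ge0 //=.
by rewrite mulrCA ler_wpM2l ?exprn_ge0 // mulrAC ler_pdivlMr // cAstar_pow_le.
Qed.

Lemma pow_summable_Astar r : (0 < c1)%N -> (0 < c2)%N -> 0 <= r ->
  pow_summable cB r -> pow_summable As r.
Proof.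
move=> hc1 hc2 r0 sumB s s'; pose m1 := Ordinal hc1; pose m2 := Ordinal hc2.
have w_neq0 : lump_weight m1 m2 != 0 by rewrite gt_eqF ?lump_weight_gt0.
have AE N : r ^+ N * (As ^+ N) s s' = \sum_a \sum_b
    lump_weight a b / lump_weight m1 m2 *
    (r ^+ N * (cB ^+ N) (cindex m1 m2 s) (cindex a b s')).
  rewrite -[(As ^+ N) s s'](mulKf w_neq0) -cAstar_pow_lump !mulr_sumr.
  by apply: eq_bigr => a _; rewrite !mulr_sumr; apply: eq_bigr => b _; ring.
under eq_eseriesr do rewrite AE pair_bigA /=.
apply: nneseries_sum_lt_pinfty => [[a b] N|[a b]] /=.
  by rewrite !mulr_ge0 ?invr_ge0 ?exprn_ge0 ?cAstar_pow_ge0 ?lump_weight_ge0.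
apply: (nneseries_lt_pinfty_le (C := lump_weight a b / lump_weight m1 m2))
  (sumB (cindex m1 m2 s) (cindex a b s')).
- by rewrite divr_ge0 ?lump_weight_ge0.
- by move=> N; rewrite mulr_ge0 ?exprn_ge0 ?cAstar_pow_ge0.
move=> N; rewrite lexx andbT.
by rewrite !mulr_ge0 ?invr_ge0 ?exprn_ge0 ?cAstar_pow_ge0 ?lump_weight_ge0.
Qed.

End Lumping.

Theorem proposition5p1 (R : realType) (s0 : nat) (A : int -> int -> 'M[R]_s0)
  (pi : 'rV[R]_s0)
  (hs0 : (0 < s0)%N)
  (hA_nonneg : forall k l, k \in dom3 -> l \in dom3 -> forall i j, 0 <= A k l i j)
  (hA_stoch : forall i, \sum_j Asum A i j = 1)
  (hirr : Y_irreducible A)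
  (haper : Y_aperiodic A)
  (hpi : stationary A pi)
  (hdrift : drift1 A pi < 0 \/ drift2 A pi < 0)
  (hPplus : Pplus_irreducible A)
  (c1 c2 : nat) (hc1 : (0 < c1)%N) (hc2 : (0 < c2)%N)
  (t1 t2 : R) :
  cp (Astar A t1 t2) = cp (cAstar A c1 c2 (c1%:R * t1) (c2%:R * t2)).
Proof.
apply: eq_cp => r r0; split.
- exact: pow_summable_cAstar hA_nonneg r r0.
- exact: pow_summable_Astar hA_nonneg r hc1 hc2 r0.
Qed.
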